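(* If exactly one agent $i$ cuts one or more links due to confirmation bias (so that $T^*$ differs from $T$ only in row $i$, with $T^*_{ij}=0<T_{ij}$ for at least one $j\neq i$), then agent $i$'s influence strictly increases: $s^*_i>s_i$.
   Context: Agents $N=\{1,\dots,n\}$ communicate through a network $T$, an $n\times n$ row-stochastic matrix with entries $T_{ij}\in[0,1]$, assumed strongly connected and aperiodic. Each agent has an initial belief $x_{i0}\in[0,1]$. Confirmation bias of strength $q\in[0,1]$ produces $T^*$: for $j\ne i$, if $|x_{i0}-x_{j0}|>1-q$ then $T^*_{ij}=0$ and $T_{ij}$ is added to the self-link $T^*_{ii}$; otherwise $T^*_{ij}=T_{ij}$. $T^*$ is assumed strongly connected. The influence vector $s$ of a network $P$ is the left eigenvector for eigenvalue $1$ normalized to sum to $1$ ($s=sP$); $s,s^*$ are the influence vectors of $T,T^*$. *)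

From HB Require Import structures.
From mathcomp Require Import all_boot all_order all_algebra.
From mathcomp Require Import reals.
Set Implicit Arguments. Unset Strict Implicit. Unset Printing Implicit Defensive.
Import Order.TTheory GRing.Theory Num.Theory.
Local Open Scope ring_scope.

Section Defs.
Variables (R : realType) (n : nat).

Definition row_stochastic (T : 'M[R]_n) : Prop :=
  (forall i j, 0 <= T i j <= 1) /\ (forall i, \sum_j T i j = 1).

Definition net_rel (T : 'M[R]_n) : rel 'I_n := fun i j => 0 < T i j.

Definition strongly_connected (T : 'M[R]_n) : Prop :=
  forall i j : 'I_n, connect (net_rel T) i j.

Definition closed_walk (T : 'M[R]_n) (i : 'I_n) (k : nat) : Prop :=
  exists p : seq 'I_n, [/\ size p = k, path (net_rel T) i p & last i p = i].

Definition aperiodic (T : 'M[R]_n) : Prop :=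
  forall d : nat, (forall i k, closed_walk T i k -> (d %| k)%N) -> d = 1%N.

Definition cuts (x0 : 'I_n -> R) (q : R) (i j : 'I_n) : bool :=
  (i != j) && (1 - q < `|x0 i - x0 j|).

Definition Tstar (T : 'M[R]_n) (x0 : 'I_n -> R) (q : R) : 'M[R]_n :=
  \matrix_(i, j)
    if i == j then T i i + \sum_(k | cuts x0 q i k) T i k
    else if cuts x0 q i j then 0 else T i j.

Definition influence_vector (P : 'M[R]_n) (s : 'rV[R]_n) : Prop :=
  s *m P = s /\ \sum_j s 0 j = 1.

End Defs.

(* Let h_k be the expected time for the chain T to reach agent i from agent k.
   By Kac's formula s_i = 1 / (1 + \sum_k T_ik h_k), the inverse of the mean
   return time to i.  The hitting times of i do not depend on row i, so T* has
   the same h; and in row i, T* only moves weight from links j != i, where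
   h_j >= 1, to the self-link, where h_i = 0.  Hence the mean return time to i
   strictly decreases. *)
From HB Require Import structures.
From mathcomp Require Import all_boot all_order all_algebra.
From mathcomp Require Import reals lra.
Import Order.TTheory GRing.Theory Num.Theory.
Local Open Scope ring_scope.

Lemma ltr_sum_one {R : numDomainType} {I : finType} {F G : I -> R} (j : I) :
  (forall k, F k <= G k) -> F j < G j -> \sum_k F k < \sum_k G k.
Proof.
move=> FG Fj; rewrite (bigD1 j) //= [X in _ < X](bigD1 j) //=.
by apply: ltr_leD => //; apply: ler_sum.
Qed.

Section HittingTimes.
Context {R : realFieldType} {n : nat}.

Definition hitting_times (P : 'M[R]_n) (i : 'I_n) (h : 'I_n -> R) : Prop :=
  h i = 0 /\ forall j, j != i -> h j = 1 + \sum_k P j k * h k.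

Definition return_time (P : 'M[R]_n) (i : 'I_n) (h : 'I_n -> R) : R :=
  1 + \sum_k P i k * h k.

Context {P : 'M[R]_n} {i : 'I_n} {h : 'I_n -> R}.
Hypothesis hP : hitting_times P i h.

Lemma hitting_times_rows {Q : 'M[R]_n} :
  (forall j k, j != i -> Q j k = P j k) -> hitting_times Q i h.
Proof.
case: hP => hi hPj QP; split=> // j ji; rewrite hPj //.
by congr (_ + _); apply: eq_bigr => k _; rewrite QP.
Qed.

(* Weighting the hitting-time equations by s and using s P = s, the terms
   \sum_k s_k h_k cancel and only the mass of the rows j != i survives. *)
Lemma kac_return_time {s : 'rV[R]_n} :
  s *m P = s -> \sum_j s 0 j = 1 -> s 0 i = (return_time P i h)^-1.
Proof.
case: hP => hi hPj sP s1; apply/esym/mulr1_eq; rewrite mulrC.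
have sh : \sum_k s 0 k * h k = \sum_j s 0 j * \sum_k P j k * h k.
  transitivity (\sum_k (\sum_j s 0 j * P j k) * h k).
    by apply: eq_bigr => k _; rewrite -{1}sP mxE.
  under eq_bigr do rewrite mulr_suml.
  rewrite exchange_big /=; apply: eq_bigr => j _; rewrite mulr_sumr.
  by apply: eq_bigr => k _; rewrite mulrA.
have sh_off : \sum_(j | j != i) s 0 j * \sum_k P j k * h k =
    \sum_(j | j != i) s 0 j * h j - \sum_(j | j != i) s 0 j.
  rewrite -sumrB; apply: eq_bigr => j ji; rewrite (hPj j ji).
  by rewrite mulrDr mulr1 addrAC subrr add0r.
rewrite (bigD1 i) //= hi mulr0 add0r [RHS](bigD1 i) //= sh_off in sh.
rewrite (bigD1 i) //= in s1.
rewrite /return_time mulrDr mulr1; lra.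
Qed.

Hypotheses (P_ge0 : forall j k, 0 <= P j k) (P_sum1 : forall j, \sum_k P j k = 1).

Lemma hitting_times_ge0 k : 0 <= h k.
Proof.
case: hP => hi hPj.
pose m := [arg min_(k < i) h k]%O.
have hm_min l : h m <= h l by rewrite /m; case: arg_minP => // j _; apply.
apply: le_trans (hm_min k); rewrite leNgt; apply/negP => hm_lt0.
have mi : m != i by apply: contraTneq hm_lt0 => ->; rewrite hi ltxx.
have : 1 + h m <= h m.
  rewrite {2}(hPj m mi) lerD2l -[leLHS]mul1r -(P_sum1 m) mulr_suml.
  by apply: ler_sum => l _; rewrite ler_wpM2l.
by rewrite gerDr ler10.
Qed.

Lemma hitting_times_ge1 j : j != i -> 1 <= h j.
Proof.
move=> ji; case: hP => _ hPj; rewrite hPj // lerDl.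
by apply: sumr_ge0 => k _; rewrite mulr_ge0 ?hitting_times_ge0.
Qed.

End HittingTimes.

Section HittingTimesExist.
Context {R : realType} {n : nat}.

Definition harmonic_off (P : 'M[R]_n) (i : 'I_n) (v : 'I_n -> R) : Prop :=
  forall j, j != i -> v j = \sum_k P j k * v k.

Definition killed_mx (P : 'M[R]_n) (i : 'I_n) : 'M[R]_n :=
  \matrix_(j, k) if j == i then 0 else P j k.

Context {P : 'M[R]_n}.
Variable i : 'I_n.
Hypotheses (P_ge0 : forall j k, 0 <= P j k) (P_sum1 : forall j, \sum_k P j k = 1).
Hypothesis P_conn : strongly_connected P.

(* At a row j != i where v is maximal, v j is an average of the v k,
   so the maximum propagates along every edge; a path to i ends at v i = 0. *)
Lemma harmonic_off_le0 (v : 'I_n -> R) :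
  v i = 0 -> harmonic_off P i v -> forall k, v k <= 0.
Proof.
move=> vi vP.
pose m := [arg max_(k > i) v k]%O.
have vm_max k : v k <= v m by rewrite /m; case: arg_maxP => // j _; apply.
suff : v m <= 0 by move=> vm_le0 k; apply: le_trans (vm_max k) vm_le0.
rewrite leNgt; apply/negP => vm_gt0.
have max_edge a b : v a = v m -> 0 < P a b -> v b = v m.
  move=> va Pab.
  have ai : a != i by apply: contraTneq vm_gt0 => ai; rewrite -va ai vi ltxx.
  have gap0 : \sum_k P a k * (v m - v k) = 0.
    under eq_bigr do rewrite mulrBr.
    by rewrite sumrB -mulr_suml P_sum1 mul1r -vP // va subrr.
  have /eqP : P a b * (v m - v b) = 0.
    by apply: (psumr_eq0P _ gap0) => // k _; rewrite mulr_ge0 ?subr_ge0.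
  by rewrite mulf_eq0 (gt_eqF Pab) subr_eq0 => /eqP.
have max_path p x : v x = v m -> path (net_rel P) x p -> v (last x p) = v m.
  elim: p x => [|y p IHp] x //= vx /andP[Pxy Pp].
  by apply: IHp => //; apply: max_edge vx Pxy.
case/connectP: (P_conn m i) => p mp ilast.
by move: vm_gt0; rewrite -(max_path p m) // -ilast vi ltxx.
Qed.

Lemma harmonic_off_eq0 (v : 'I_n -> R) :
  v i = 0 -> harmonic_off P i v -> forall k, v k = 0.
Proof.
move=> vi vP k; apply/eqP; rewrite eq_le harmonic_off_le0 //= -oppr_le0.
apply: (harmonic_off_le0 (fun k => - v k)) => [|j ji]; first by rewrite vi oppr0.
by rewrite vP // -sumrN; apply: eq_bigr => l _; rewrite mulrN.
Qed.

Lemma killed_mx_fixed (w : 'cV[R]_n) : killed_mx P i *m w = w -> w = 0.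
Proof.
move=> Qw; apply/colP => k; rewrite mxE.
apply: (harmonic_off_eq0 (fun k => w k 0)) => [|j ji] /=; rewrite -{1}Qw mxE.
  by apply: big1 => k' _; rewrite mxE eqxx mul0r.
by apply: eq_bigr => k' _; rewrite mxE (negbTE ji).
Qed.

Lemma unitmx_killed : 1%:M - killed_mx P i \in unitmx.
Proof.
rewrite -unitmx_tr -row_free_unit; apply: inj_row_free => v.
move=> vA; apply: trmx_inj; rewrite trmx0; apply: killed_mx_fixed.
apply/eqP; rewrite eq_sym -subr_eq0 -{1}[v^T]mul1mx -mulmxBl.
by rewrite -[_ *m _]trmxK trmx_mul trmxK vA trmx0.
Qed.

Lemma hitting_times_exist : exists h, hitting_times P i h.
Proof.
pose b : 'cV[R]_n := \col_j (j != i)%:R.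
pose hv := invmx (1%:M - killed_mx P i) *m b.
have : (1%:M - killed_mx P i) *m hv = b by rewrite mulKVmx ?unitmx_killed.
rewrite mulmxBl mul1mx => /eqP; rewrite subr_eq => /eqP hvE.
exists (fun k => hv k 0); split=> [|j ji]; rewrite {1}hvE !mxE ?eqxx ?(negbTE ji) /=.
  by rewrite add0r; apply: big1 => k _; rewrite mxE eqxx mul0r.
by congr (_ + _); apply: eq_bigr => k _; rewrite mxE (negbTE ji).
Qed.

End HittingTimesExist.

Lemma Tstar_offdiag_le {R : realType} {n : nat} {T : 'M[R]_n} (x0 : 'I_n -> R) (q : R)
  {i k : 'I_n} :
  (forall a b, 0 <= T a b) -> k != i -> 0 <= Tstar T x0 q i k <= T i k.
Proof.
by move=> T0 ki; rewrite mxE eq_sym (negbTE ki); case: ifP; rewrite ?lexx ?T0.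
Qed.

Theorem mainTheorem3 (R : realType) (n : nat) (T : 'M[R]_n)
  (x0 : 'I_n -> R) (q : R) (s sstar : 'rV[R]_n) (i : 'I_n) :
  row_stochastic T -> strongly_connected T -> aperiodic T ->
  (forall k, 0 <= x0 k <= 1) -> 0 <= q <= 1 ->
  strongly_connected (Tstar T x0 q) ->
  influence_vector T s -> influence_vector (Tstar T x0 q) sstar ->
  (forall k j, k != i -> Tstar T x0 q k j = T k j) ->
  (exists j, j != i /\ Tstar T x0 q i j = 0 /\ 0 < T i j) ->
  s 0 i < sstar 0 i.
Proof.
move=> [T01 T1] Tconn _ _ _ _ [sT s1] [sT' s1'] same_rows [j [ji [cut_j Tij]]].
have T0 a b : 0 <= T a b by case/andP: (T01 a b).
have [h hT] := hitting_times_exist i T0 T1 Tconn.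
have h0 := hitting_times_ge0 hT T0 T1.
have hT' := hitting_times_rows hT same_rows.
have cut_le k : 0 <= Tstar T x0 q i k * h k <= T i k * h k.
  have [->|ki] := eqVneq k i; first by rewrite hT.1 !mulr0 lexx.
  by case/andP: (Tstar_offdiag_le x0 q T0 ki) => ? ?; rewrite mulr_ge0 ?ler_wpM2r.
have return_gt0 (P : 'M[R]_n) : (forall k, 0 <= P i k * h k) -> 0 < return_time P i h.
  by move=> P0; rewrite ltr_wpDr ?ltr01 ?sumr_ge0.
have return_lt : return_time (Tstar T x0 q) i h < return_time T i h.
  rewrite ltrD2l (ltr_sum_one j) => [//|k|]; first by case/andP: (cut_le k).
  rewrite cut_j mul0r mulr_gt0 // (lt_le_trans ltr01) //.
  exact: hitting_times_ge1 hT T0 T1 j ji.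
rewrite (kac_return_time hT sT s1) (kac_return_time hT' sT' s1').
by rewrite ltf_pV2 ?posrE ?return_gt0 // => k; [rewrite mulr_ge0 | case/andP: (cut_le k)].
Qed.
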